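(* Let $n\ge3$ and $k\ge1$. In $H_{n,k}$ the clustering coefficients are as follows. (a) The root $\mathbf r=0\ldots0$ has $c(\mathbf r)=\dfrac{(n-2)^2}{(n-1)^{k+1}-2n+3}$. (b) For each $1\le i\le k-1$, every vertex $\mathbf v=\alpha_1\ldots\alpha_i0\ldots0$ (with $k-i$ trailing zeros) with $\alpha_i\neq0$ has $c(\mathbf v)=\dfrac{(n-2)^2}{(n-1)^{k-i+1}+(n-1)^2-3n+4}$. (c) Every vertex $\mathbf p$ with all coordinates nonzero has $c(\mathbf p)=\dfrac{(n-1)^2+(2k-3)(n-1)+2-2k}{(n+k-2)(n+k-3)}$. (d) For each $1\le i\le k-1$, every vertex $\mathbf p=x_1\ldots x_k$ with $x_i=0$ and $x_j\ne0$ for all $i<j\le k$ has $c(\mathbf p)=\dfrac{(n-1)^2+(2k-2i-3)(n-1)+2+2i-2k}{(n+k-i-2)(n+k-i-3)}$.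
   Context: Let $n\ge 2$ and $k\ge 1$ be integers. $H_{n,k}$ is the simple undirected graph with vertex set $V_{n,k}=\mathbb{Z}_n^k$ (so $|V_{n,k}|=n^k$), whose vertices are written as strings $x_1x_2\ldots x_k$ with $x_j\in\mathbb{Z}_n=\{0,1,\ldots,n-1\}$. Two distinct vertices are adjacent if and only if they are related by one of the following rules. For $i=0$ the prefix $x_1\ldots x_i$ is empty, and ''$0\ldots0$'' denotes a string of zeros completing the word to length $k$. (R1) $x_1\ldots x_{k-1}x_k\sim x_1\ldots x_{k-1}y_k$ whenever $y_k\neq x_k$. (R2) For $0\le i\le k-2$: $x_1\ldots x_i0\ldots0\sim x_1\ldots x_ix_{i+1}\ldots x_k$ whenever $x_j\neq 0$ for all $i+1\le j\le k$. (R3) For $1\le i\le k-1$: $x_1\ldots x_{i-1}x_i0\ldots0\sim x_1\ldots x_{i-1}y_i0\ldots0$ whenever $x_i,y_i\neq0$ and $x_i\ne y_i$. In particular, $H_{n,1}$ is the complete graph $K_n$. For a vertex $v$ of degree $\delta_v\ge2$, its clustering coefficient is $c(v)=\frac{2\epsilon_v}{\delta_v(\delta_v-1)}$, where $\epsilon_v$ is the number of edges of the graph joining two neighbours of $v$. *)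

From HB Require Import structures.
From mathcomp Require Import all_boot all_order all_algebra.
Set Implicit Arguments. Unset Strict Implicit. Unset Printing Implicit Defensive.
Import Order.TTheory GRing.Theory Num.Theory.

(* Vertices of H_{n,k}: words x_1...x_k over Z_n, encoded as functions
   'I_k -> 'I_n.  Paper position j (1-based) is index j-1 (0-based) here.
   A letter is "zero" iff its nat value is 0. *)
Definition vtx (n k : nat) := {ffun 'I_k -> 'I_n}.

Section H.
Variables n k : nat.
Implicit Types x y : vtx n k.

Definition R1 x y : bool := [forall p : 'I_k, (p < k.-1)%N ==> (x p == y p)].

(* (R2), 0 <= i <= k-2 (i.e. i+2 <= k) : x = x_1..x_i 0..0, y = x_1..x_i y_{i+1}..y_k with
   all y_j (i+1 <= j <= k) nonzero.  0-based: positions p < i shared,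
   positions p >= i : x p = 0, y p <> 0. *)
Definition R2 x y : bool :=
  [exists i : 'I_k, (i.+2 <= k)%N &&
    [forall p : 'I_k, if (p < i)%N then x p == y p
                      else (val (x p) == 0%N) && (val (y p) != 0%N)]].

(* (R3), 1 <= i <= k-1 : x = x_1..x_{i-1} x_i 0..0, y = x_1..x_{i-1} y_i 0..0,
   x_i, y_i nonzero and distinct.  0-based: letter x_i is index i-1. *)
Definition R3 x y : bool :=
  [exists i : 'I_k, (1 <= i)%N &&
    [forall p : 'I_k,
       if (p < i.-1)%N then x p == y p
       else if val p == i.-1 then
         [&& val (x p) != 0%N, val (y p) != 0%N & x p != y p]
       else (val (x p) == 0%N) && (val (y p) == 0%N)]].

(* adjacency of H_{n,k}: distinct and related by one of the rules
   (R2 is stated one-directionally, so we symmetrize). *)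
Definition adj x y : bool :=
  (x != y) && [|| R1 x y, R2 x y, R2 y x | R3 x y].

Definition deg x : nat := #|[set y | adj x y]|.

Definition eps v : nat :=
  #|[set E : {set vtx n k} |
      [exists a, exists b,
        [&& E == [set a; b], adj a b, adj v a & adj v b]]]|.

Definition clust v : rat :=
  (2 * (eps v)%:R / ((deg v)%:R * ((deg v)%:R - 1)))%R.
End H.

From HB Require Import structures.
From mathcomp Require Import all_boot all_order all_algebra.
From mathcomp Require Import zify ring lra.
Import Order.TTheory GRing.Theory Num.Theory.
Set Implicit Arguments. Unset Strict Implicit. Unset Printing Implicit Defensive.

(* Every vertex falls into one of two shapes, and in both the neighbourhood splits into
   cliques whose mutual adjacencies are explicit.
   If v = x_1..x_k with x_(s+1), ..., x_k nonzero and x_s = 0 (or s = 0), its neighbours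
   are the n-2 "siblings" obtained by changing x_k to another nonzero letter, which form a
   clique, and the k-s truncations x_1..x_l 0..0 with s <= l < k; each truncation is
   adjacent to all siblings and to no other truncation.
   If v = x_1..x_j 0..0 with x_j <> 0 (or v is the root, j = 0), its neighbours are the
   (n-1)^(k-i) words x_1..x_i y_(i+1)..y_k with all y nonzero, for j <= i < k, each of which
   has only its own siblings as common neighbours with v, together with (for j > 0) the
   n-2 words obtained by changing x_j to another nonzero letter, which form a clique.
   Summing |N(v) :&: N(a)| over the neighbours a of v gives 2 eps_v, and the geometric sum
   (n-1) + ... + (n-1)^(k-j) yields the closed forms. *)

Lemma card_ffun_pointwise (aT rT : finType) (F : aT -> pred rT) :
  #|[set y : {ffun aT -> rT} | [forall p, y p \in F p]]| = \prod_p #|F p|.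
Proof.
have := card_family F; rewrite foldrE big_map big_enum /= => <-.
by apply: eq_card => y; rewrite inE; apply/forallP/familyP => H p; exact: H.
Qed.

Lemma prod_nat_cond_const (I : finType) (P : pred I) (x : nat) :
  \prod_i (if P i then x else 1) = x ^ #|P|.
Proof. by rewrite -big_mkcond prod_nat_const. Qed.

Lemma card_ord_geq k a : #|[pred p : 'I_k | a <= p]| = k - a.
Proof.
rewrite -sum1_card; under eq_bigl do rewrite inE.
rewrite big_mkcond /=.
elim: k => [|k IH]; first by rewrite big_ord0.
rewrite big_ord_recr /= IH; case: leqP => ?; lia.
Qed.

Lemma card_ord_neq0 m : #|[pred c : 'I_m.+1 | c != 0 :> nat]| = m.
Proof.
transitivity #|predC1 (ord0 : 'I_m.+1)|; last by rewrite cardC1 card_ord.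
by apply: eq_card => c; rewrite !inE.
Qed.

Lemma card_ord_neq0_neq m (b : 'I_m.+1) : b != 0 :> nat ->
  #|[pred c : 'I_m.+1 | (c != 0 :> nat) && (c != b)]| = m.-1.
Proof.
move=> b_neq0; have := cardD1 b [pred c : 'I_m.+1 | c != 0 :> nat].
rewrite card_ord_neq0 inE b_neq0 => cardE; rewrite [in RHS]cardE add1n.
by apply: eq_card => c; rewrite !inE andbC.
Qed.

Lemma sum_nat_setU_disjoint (T : finType) (A B : {set T}) (F : T -> nat) :
  [disjoint A & B] ->
  \sum_(i in A :|: B) F i = \sum_(i in A) F i + \sum_(i in B) F i.
Proof. by move=> AB; rewrite -bigU //; apply: eq_bigl => i; rewrite !inE. Qed.

Ltac ord_lia := simpl in *; lia.

Section Graph.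
Variables (m k : nat).
Local Notation n := m.+1.
Local Notation V := (vtx n k).
Implicit Types x y v a b : V.

Lemma R1P x y : R1 x y <-> (forall p : 'I_k, p < k.-1 -> x p = y p).
Proof.
split => [/forallP H p p_lt | H].
  by apply/eqP; move: (H p) => /implyP; apply.
by apply/forallP => p; apply/implyP => p_lt; apply/eqP; exact: H.
Qed.

Lemma R2P x y : R2 x y <-> exists i, i.+2 <= k /\
  (forall p : 'I_k, (p < i -> x p = y p) /\
                    (i <= p -> x p = 0 :> nat /\ y p <> 0 :> nat)).
Proof.
split.
  case/existsP => i /andP [i_lt /forallP H]; exists i; split => // p.
  move: (H p); case: ifP => p_i.
    by move/eqP => e; split => // ?; ord_lia.
  by case/andP => /eqP x0 /eqP y0; split => // _; lia.
case=> i [i_lt H]; apply/existsP; exists (Ordinal (leq_trans (leqnSn _) i_lt)).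
rewrite /= i_lt /=; apply/forallP => p; have [lt ge] := H p.
case: ifP => p_i; first by rewrite lt.
have p_ge : i <= p by rewrite leqNgt p_i.
by have [-> /eqP ->] := ge p_ge.
Qed.

Lemma R3P x y : R3 x y <-> exists i, 0 < i < k /\
  (forall p : 'I_k, (p < i.-1 -> x p = y p) /\
     (p = i.-1 :> nat -> [/\ x p <> 0 :> nat, y p <> 0 :> nat & x p <> y p]) /\
     (i <= p -> x p = 0 :> nat /\ y p = 0 :> nat)).
Proof.
split.
  case/existsP => i /andP [i_gt0 /forallP H]; exists i; split; first by rewrite i_gt0 /=.
  move=> p; move: (H p); case: ifP => p_lt.
    by move/eqP => e; split; [move=> _ | split => ?; ord_lia].
  case: eqP => p_i.
    by case/and3P => /eqP x0 /eqP y0 /eqP xy; split; [move=> ?; ord_lia | split => ?; [|ord_lia]].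
  by case/andP => /eqP x0 /eqP y0; split; [move=> ?; ord_lia | split => ?; [ord_lia|]].
case=> i [/andP [i_gt0 i_lt] H]; apply/existsP; exists (Ordinal i_lt).
rewrite /= i_gt0 /=; apply/forallP => p; have [lt [mid ge]] := H p.
case: ifP => p_lt; first by rewrite lt.
case: eqP => p_i; first by have [/eqP -> /eqP -> /eqP ->] := mid p_i.
have p_ge : i <= p by lia.
by have [-> ->] := ge p_ge.
Qed.

Lemma adjP x y : adj x y <-> x <> y /\ (R1 x y \/ R2 x y \/ R2 y x \/ R3 x y).
Proof.
rewrite /adj; split.
  by case/andP => /eqP neq /or4P H; split => //; case: H; tauto.
case=> /eqP -> H /=; apply/or4P.
by case: H => [?|[?|[?|?]]]; [constructor 1|constructor 2|constructor 3|constructor 4].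
Qed.

Lemma adj_sym x y : adj x y = adj y x.
Proof.
suff adjC x' y' : adj x' y' -> adj y' x' by apply/idP/idP; apply: adjC.
move=> /adjP [neq H]; apply/adjP; split; first by move=> e; apply: neq.
case: H => [/R1P h | [h | [h | /R3P [i [i_lt h]]]]].
- by left; apply/R1P => p p_lt; rewrite h.
- by right; right; left.
- by right; left.
- right; right; right; apply/R3P; exists i; split => // p.
  have [lt [mid ge]] := h p; split; first by move=> ?; rewrite lt.
  split; first by move=> /mid [? ? ?]; split => //; apply: nesym.
  by move=> /ge [? ?].
Qed.

Lemma adjxx x : adj x x = false.
Proof. by rewrite /adj eqxx. Qed.

Lemma R1_adj x y : x <> y -> (forall p : 'I_k, p < k.-1 -> x p = y p) -> adj x y.
Proof. by move=> neq agree; apply/adjP; split => //; left; apply/R1P. Qed.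

Definition nbhd v := [set y | adj v y].

Lemma in_nbhd v y : (y \in nbhd v) = adj v y. Proof. by rewrite inE. Qed.

Definition nbhd_arcs v :=
  [set ab : V * V | [&& adj v ab.1, adj v ab.2 & adj ab.1 ab.2]].

Lemma eps_arcs v : 2 * eps v = #|nbhd_arcs v|.
Proof.
rewrite /eps; set Es := [set E : {set V} | _].
rewrite -[#|nbhd_arcs v|]sum1_card.
rewrite (partition_big (fun ab : V * V => [set ab.1; ab.2]) (mem Es)) /=; last first.
  case=> a b; rewrite inE /= => /and3P [va vb ab]; rewrite inE.
  by apply/existsP; exists a; apply/existsP; exists b; rewrite eqxx ab va vb.
rewrite mulnC -sum_nat_const; apply: eq_bigr => E.
rewrite inE => /existsP [a /existsP [b /and4P [/eqP -> ab va vb]]].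
rewrite sum1dep_card.
have -> : [set ab : V * V | (ab \in nbhd_arcs v) && ([set ab.1; ab.2] == [set a; b])]
          = [set (a, b); (b, a)].
  apply/setP => -[x y]; rewrite !inE /=; apply/idP/idP.
    case/andP => /and3P [vx vy xy] /eqP e.
    have : x \in [set a; b] by rewrite -e !inE eqxx.
    have : y \in [set a; b] by rewrite -e !inE eqxx orbT.
    rewrite !inE => /orP [] /eqP ey /orP [] /eqP ex; subst x y;
      rewrite ?eqxx ?orbT //; by rewrite adjxx in xy.
  case/orP => /eqP [-> ->] /=; first by rewrite va vb ab eqxx.
  by rewrite va vb adj_sym ab setUC eqxx.
rewrite cards2; case: eqP => // -[e _]; by rewrite e adjxx in ab.
Qed.

Lemma card_nbhd_arcs v :
  #|nbhd_arcs v| = \sum_(a in nbhd v) #|nbhd v :&: nbhd a|.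
Proof.
rewrite -sum1_card (partition_big (fun ab : V * V => ab.1) (mem (nbhd v))) /=;
  last by case=> a b; rewrite !inE /= => /and3P [va _ _].
apply: eq_bigr => a va; rewrite sum1dep_card.
have inj_pair : injective (fun b : V => (a, b)) by move=> b1 b2 [].
rewrite -(card_imset _ inj_pair); apply: eq_card => -[x y]; rewrite !inE /=.
apply/idP/imsetP.
  case/andP => /and3P [_ vy xy] /eqP ex; subst x.
  by exists y; rewrite // !inE vy xy.
case=> b; rewrite !inE => /andP [vb ab] [-> ->].
by rewrite inE in va; rewrite va vb ab eqxx.
Qed.

Lemma clust_sum_common v : clust v =
  ((\sum_(a in nbhd v) #|nbhd v :&: nbhd a|)%:R / ((deg v)%:R * ((deg v)%:R - 1)))%R.
Proof. by rewrite /clust -natrM eps_arcs card_nbhd_arcs. Qed.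

Hypothesis k_gt0 : 0 < k.

Definition last_pos : 'I_k := Ordinal (etrans (ltn_predL k) k_gt0).

Lemma last_posE (p : 'I_k) : ~~ (p < k.-1) -> p = last_pos.
Proof. by move=> p_ge; apply: ord_inj; move: (ltn_ord p); ord_lia. Qed.

Lemma R2_last x y : R2 x y -> x last_pos = 0 :> nat /\ y last_pos <> 0 :> nat.
Proof. by case/R2P => i [i_lt H]; apply: (proj2 (H last_pos)); ord_lia. Qed.

Lemma R3_last x y : R3 x y -> x last_pos = 0 :> nat /\ y last_pos = 0 :> nat.
Proof. by case/R3P => i [i_lt H]; apply: (proj2 (proj2 (H last_pos))); ord_lia. Qed.

Definition siblings x := [set y : V | [forall p, y p \in
  [pred c : 'I_n | if p < k.-1 then c == x p else (c != 0 :> nat) && (c != x p)]]].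

Lemma siblingsP x y : y \in siblings x <->
  [/\ forall p : 'I_k, p < k.-1 -> y p = x p,
      y last_pos <> 0 :> nat & y last_pos <> x last_pos].
Proof.
rewrite inE; split.
  move/forallP => H; split.
  - by move=> p p_lt; move: (H p); rewrite inE /= p_lt => /eqP.
  - by move: (H last_pos); rewrite inE /= ltnn => /andP [/eqP ? _].
  - by move: (H last_pos); rewrite inE /= ltnn => /andP [_ /eqP ?].
case=> agree y0 neq; apply/forallP => p; rewrite inE /=.
case: ifP => p_lt; first by rewrite agree.
by rewrite (last_posE (negbT p_lt)); apply/andP; split; apply/eqP.
Qed.

Lemma card_siblings x : x last_pos != 0 :> nat -> #|siblings x| = m.-1.
Proof.
move=> x0; rewrite card_ffun_pointwise.
rewrite (eq_bigr (fun p : 'I_k => if ~~ (p < k.-1) then m.-1 else 1)); last first.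
  move=> p _; case: ifP => p_lt /=.
    rewrite (last_posE p_lt) -(card_ord_neq0_neq x0).
    by apply: eq_card => c; rewrite !inE /= ltnn.
  by rewrite -(card1 (x p)); apply: eq_card => c; rewrite !inE /= (negbFE p_lt).
rewrite prod_nat_cond_const.
have -> : #|[pred p : 'I_k | ~~ (p < k.-1)]| = 1.
  rewrite -[RHS](_ : k - k.-1 = 1); last by lia.
  by rewrite -card_ord_geq; apply: eq_card => p; rewrite !inE /= -leqNgt.
exact: expn1.
Qed.

Lemma siblings_adj x a b : a \in siblings x -> b \in siblings x -> a != b -> adj a b.
Proof.
move=> /siblingsP [xa _ _] /siblingsP [xb _ _] /eqP neq.
by apply: R1_adj => // p p_lt; rewrite xa ?xb.
Qed.

Section SuffixNonzero.
Variables (v : V) (s : nat).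
Hypothesis s_lt : s < k.
Hypothesis suffix_neq0 : forall p : 'I_k, s <= p -> v p <> 0 :> nat.
Hypothesis pred_eq0 : forall p : 'I_k, 0 < s -> p = s.-1 :> nat -> v p = 0 :> nat.

Definition truncation (l : nat) : V := [ffun p : 'I_k => if p < l then v p else ord0].

Definition truncations := [set truncation (nat_of_ord l) | l in [pred l : 'I_k | s <= l]].

Lemma last_neq0 : v last_pos <> 0 :> nat.
Proof. by apply: suffix_neq0; ord_lia. Qed.

Lemma truncation_lt l (p : 'I_k) : p < l -> truncation l p = v p.
Proof. by move=> p_lt; rewrite ffunE p_lt. Qed.

Lemma truncation_ge l (p : 'I_k) : l <= p -> truncation l p = 0 :> nat.
Proof. by move=> p_ge; rewrite ffunE ltnNge p_ge. Qed.

Lemma truncation_last (l : 'I_k) : truncation l last_pos = 0 :> nat.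
Proof. by apply: truncation_ge; move: (ltn_ord l); ord_lia. Qed.

Lemma truncationsP y : y \in truncations <-> exists2 l : 'I_k, s <= l & y = truncation l.
Proof.
split; first by case/imsetP => l s_l ->; exists l; rewrite inE in s_l.
by case=> l s_l ->; apply/imsetP; exists l; rewrite ?inE.
Qed.

Lemma card_truncations : #|truncations| = k - s.
Proof.
rewrite card_in_imset; first exact: card_ord_geq.
move=> l1 l2; rewrite !inE => s_l1 s_l2 e.
apply: ord_inj; apply/eqP; rewrite eqn_leq; apply/andP; split;
  rewrite leqNgt; apply/negP => lt.
  by have := truncation_ge (leqnn l2); rewrite -e truncation_lt //; apply: suffix_neq0; lia.
by have := truncation_ge (leqnn l1); rewrite e truncation_lt //; apply: suffix_neq0; lia.
Qed.

Lemma sibling_truncation_adj x (l : 'I_k) : x \in siblings v -> s <= l -> adj x (truncation l).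
Proof.
move=> /siblingsP [agree x0 _] s_l; apply/adjP; split.
  by move=> e; apply: x0; rewrite e truncation_last.
case: (ltnP l k.-1) => l_lt; last first.
  by left; apply/R1P => p p_lt; rewrite truncation_lt ?agree //; ord_lia.
right; right; left; apply/R2P; exists l; split; first by ord_lia.
move=> p; split; first by move=> p_lt; rewrite truncation_lt // agree //; ord_lia.
move=> l_p; split; first exact: truncation_ge.
case: (ltnP p k.-1) => p_lt; first by rewrite agree //; apply: suffix_neq0; lia.
by rewrite (last_posE (p := p)) // -leqNgt.
Qed.

Lemma truncation_nadj (l l' : 'I_k) :
  s <= l -> s <= l' -> adj (truncation l) (truncation l') = false.
Proof.
move=> s_l s_l'; apply/negP => /adjP [neq H].
case: H => [/R1P h | [h | [h | /R3P [i [i_lt h]]]]].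
- suff agree_lt (a b : 'I_k) : s <= a -> a < b ->
      ~ (forall p : 'I_k, p < k.-1 -> truncation a p = truncation b p).
    have [lt | gt | /ord_inj eq] := ltngtP l l'; last by rewrite eq in neq.
      exact: agree_lt lt h.
    by apply: (agree_lt _ _ s_l' gt) => p /h ->.
  move=> s_a lt agree; have a_lt : a < k.-1 by move: (ltn_ord b); lia.
  have := truncation_ge (leqnn a); rewrite agree // truncation_lt //; exact: suffix_neq0.
- by have [_] := R2_last h; rewrite truncation_last.
- by have [_] := R2_last h; rewrite truncation_last.
- have i_lt' : i.-1 < k by lia.
  have [_ [/(_ erefl) [ne1 ne2 neq'] _]] := h (Ordinal i_lt').
  have lt_pos (l0 : 'I_k) : truncation l0 (Ordinal i_lt') <> 0 :> nat -> i.-1 < l0.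
    by rewrite ltnNge => ne; apply/negP => ge; apply: ne; exact: truncation_ge.
  by apply: neq'; rewrite !truncation_lt //; [apply: lt_pos | apply: lt_pos].
Qed.

Lemma nbhd_suffix_neq0 : nbhd v = siblings v :|: truncations.
Proof.
apply/setP => y; rewrite in_setU inE; apply/idP/orP.
- move/adjP => [neq [/R1P agree | [h | [/R2P [i [i_lt h]] | h]]]].
  + have [y0 | y_neq0] := eqVneq (y last_pos : nat) 0.
      right; apply/truncationsP; exists last_pos; first by ord_lia.
      apply/ffunP => p; rewrite ffunE; case: ifP => p_lt; first by rewrite agree.
      by rewrite (last_posE (negbT p_lt)); apply: ord_inj; rewrite y0.
    left; apply/siblingsP; split => [p p_lt | | e]; first by rewrite agree.
      exact/eqP.
    apply: neq; apply/ffunP => p; have [p_lt | p_ge] := ltnP p k.-1.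
      by rewrite agree.
    by rewrite (last_posE (p := p)) ?e // -leqNgt.
  + by have [/last_neq0] := R2_last h.
  + have s_i : s <= i.
      rewrite leqNgt; apply/negP => i_lt_s; have s1_lt : s.-1 < k by lia.
      have [_ /(_ _)/proj2] := h (Ordinal s1_lt); apply; first by ord_lia.
      by apply: pred_eq0 => /=; lia.
    have i_lt' : i < k by lia.
    right; apply/truncationsP; exists (Ordinal i_lt') => //.
    apply/ffunP => p; rewrite ffunE /=; have [lt ge] := h p.
    case: ifP => p_lt; first by rewrite lt.
    by apply: ord_inj; rewrite (proj1 (ge _)) // leqNgt p_lt.
  + by have [/last_neq0] := R3_last h.
- case=> [/siblingsP [agree _ neq] | /truncationsP [l s_l ->]].
  + by apply: R1_adj => [e | p p_lt]; [apply: neq; rewrite e | rewrite agree].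
  + apply/adjP; split.
      by move=> e; have := truncation_last l; rewrite -e; exact: last_neq0.
    case: (ltnP l k.-1) => l_lt; last first.
      by left; apply/R1P => p p_lt; rewrite truncation_lt //; ord_lia.
    right; right; left; apply/R2P; exists l; split; first by ord_lia.
    move=> p; split; first by move=> p_lt; rewrite truncation_lt.
    by move=> l_p; split; [exact: truncation_ge | apply: suffix_neq0; lia].
Qed.

Lemma disjoint_siblings_truncations : [disjoint siblings v & truncations].
Proof.
apply/pred0P => y /=; apply/negP => /andP [/siblingsP [_ y0 _] /truncationsP [l _ e]].
by apply: y0; rewrite e truncation_last.
Qed.

Lemma deg_suffix_neq0 : deg v = m.-1 + (k - s).
Proof.
rewrite /deg -/(nbhd v) nbhd_suffix_neq0 -sum1_card.
rewrite sum_nat_setU_disjoint ?disjoint_siblings_truncations // !sum1_card.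
by rewrite card_truncations card_siblings //; apply/eqP; exact: last_neq0.
Qed.

Lemma common_nbhd_sibling a : a \in siblings v -> nbhd v :&: nbhd a = nbhd v :\ a.
Proof.
move=> sib_a; apply/setP => b; rewrite !inE.
have [-> | neq] := eqVneq b a; first by rewrite adjxx andbF.
case vb: (adj v b) => //=.
have : b \in nbhd v by rewrite inE.
rewrite nbhd_suffix_neq0 in_setU => /orP [sib_b | /truncationsP [l s_l ->]].
  by apply: siblings_adj sib_a sib_b _; rewrite eq_sym.
exact: sibling_truncation_adj.
Qed.

Lemma common_nbhd_truncation (l : 'I_k) : s <= l -> nbhd v :&: nbhd (truncation l) = siblings v.
Proof.
move=> s_l; apply/setP => b; rewrite in_setI nbhd_suffix_neq0 in_setU !in_nbhd.
case sib_b: (b \in siblings v) => /=; first by rewrite adj_sym sibling_truncation_adj.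
case trunc_b: (b \in truncations) => //=; have [l' s_l' ->] := (truncationsP b).1 trunc_b.
exact: truncation_nadj.
Qed.

Lemma sum_common_suffix_neq0 :
  \sum_(a in nbhd v) #|nbhd v :&: nbhd a| = m.-1 * (m.-1 + (k - s)).-1 + (k - s) * m.-1.
Proof.
have v_neq0 : v last_pos != 0 :> nat by apply/eqP; exact: last_neq0.
rewrite [in X in \sum_(a in X) _]nbhd_suffix_neq0.
rewrite sum_nat_setU_disjoint ?disjoint_siblings_truncations //.
rewrite (eq_bigr (fun _ => (m.-1 + (k - s)).-1)); last first.
  move=> a sib_a; rewrite common_nbhd_sibling //.
  have a_nb : a \in nbhd v by rewrite nbhd_suffix_neq0 in_setU sib_a.
  have := cardsD1 a (nbhd v).
  by rewrite a_nb (deg_suffix_neq0 : #|nbhd v| = _) add1n => ->.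
rewrite [X in _ + X](eq_bigr (fun _ => m.-1)); last first.
  by move=> a /truncationsP [l s_l ->]; rewrite common_nbhd_truncation // card_siblings.
by rewrite !sum_nat_const card_truncations card_siblings.
Qed.
End SuffixNonzero.

Section SuffixZero.
Variables (v : V) (j : nat).
Hypothesis j_lt : j < k.
Hypothesis suffix_eq0 : forall p : 'I_k, j <= p -> v p = 0 :> nat.
Hypothesis pred_neq0 : forall p : 'I_k, 0 < j -> p = j.-1 :> nat -> v p <> 0 :> nat.

Definition extensions (i : nat) := [set y : V | [forall p, y p \in
  [pred c : 'I_n | if p < i then c == v p else c != 0 :> nat]]].

Definition extension_set := [set y : V | [exists i : 'I_k, (j <= i) && (y \in extensions i)]].

Definition twins := [set y : V | (0 < j) && [forall p, y p \in
  [pred c : 'I_n | if p == j.-1 :> nat then (c != 0 :> nat) && (c != v p) else c == v p]]].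

Definition pos_j : 'I_k := Ordinal (leq_ltn_trans (leq_pred j) j_lt).

Lemma extensionsP i y : y \in extensions i <->
  (forall p : 'I_k, p < i -> y p = v p) /\ (forall p : 'I_k, i <= p -> y p <> 0 :> nat).
Proof.
rewrite inE; split.
  by move/forallP => H; split => p p_i; move: (H p); rewrite inE /= ?p_i ?ltnNge ?p_i /= => /eqP.
case=> lt ge; apply/forallP => p; rewrite inE /=.
case: ifP => p_i; first by rewrite lt.
by apply/eqP; apply: ge; rewrite leqNgt p_i.
Qed.

Lemma extension_setP y : y \in extension_set <-> exists2 i : 'I_k, j <= i & y \in extensions i.
Proof.
rewrite inE; split; first by case/existsP => i /andP [j_i ext]; exists i.
by case=> i j_i ext; apply/existsP; exists i; rewrite j_i.
Qed.

Lemma twinsP y : y \in twins <-> [/\ 0 < j,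
  forall p : 'I_k, p <> j.-1 :> nat -> y p = v p &
  forall p : 'I_k, p = j.-1 :> nat -> y p <> 0 :> nat /\ y p <> v p].
Proof.
rewrite inE; split.
  case/andP => j_gt0 /forallP H; split => // p p_j; move: (H p); rewrite inE /=.
    by move/eqP: p_j => /negbTE -> /eqP.
  by rewrite p_j eqxx => /andP [/eqP ? /eqP ?].
case=> j_gt0 off diff; rewrite j_gt0 /=; apply/forallP => p; rewrite inE /=.
case: eqP => p_j; last by rewrite off.
by have [? ?] := diff p p_j; apply/andP; split; apply/eqP.
Qed.

Lemma card_extensions i : i <= k -> #|extensions i| = m ^ (k - i).
Proof.
move=> i_le; rewrite card_ffun_pointwise.
rewrite (eq_bigr (fun p : 'I_k => if ~~ (p < i) then m else 1)); last first.
  move=> p _; case: ifP => p_i /=.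
    rewrite -[RHS](card_ord_neq0 m).
    by apply: eq_card => c; rewrite !inE /= (negbTE p_i).
  by rewrite -(card1 (v p)); apply: eq_card => c; rewrite !inE /= (negbFE p_i).
rewrite prod_nat_cond_const -card_ord_geq; congr (_ ^ _).
by apply: eq_card => p; rewrite !inE /= leqNgt.
Qed.

Lemma card_twins : 0 < j -> #|twins| = m.-1.
Proof.
move=> j_gt0.
have -> : twins = [set y : V | [forall p, y p \in
    [pred c : 'I_n | if p == j.-1 :> nat then (c != 0 :> nat) && (c != v p) else c == v p]]].
  by apply/setP => y; rewrite !inE j_gt0.
rewrite card_ffun_pointwise.
rewrite (eq_bigr (fun p : 'I_k => if p == j.-1 :> nat then m.-1 else 1)); last first.
  move=> p _; case: eqP => p_j /=.
    have vp_neq0 : v p != 0 :> nat by apply/eqP; exact: pred_neq0.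
    by rewrite -(card_ord_neq0_neq vp_neq0); apply: eq_card => c; rewrite !inE.
  by rewrite -(card1 (v p)); apply: eq_card => c; rewrite !inE /=; case: eqP.
rewrite prod_nat_cond_const.
suff -> : #|[pred p : 'I_k | p == j.-1 :> nat]| = 1 by rewrite expn1.
by rewrite -(card1 pos_j); apply: eq_card => p; rewrite !inE.
Qed.

Lemma twins_j0 : j = 0 -> twins = set0.
Proof. by move=> j0; apply/setP => y; rewrite !inE j0. Qed.

Lemma extensions_uniq (i1 i2 : 'I_k) y : j <= i1 -> j <= i2 ->
  y \in extensions i1 -> y \in extensions i2 -> i1 = i2.
Proof.
move=> j_i1 j_i2 /extensionsP [lt1 ge1] /extensionsP [lt2 ge2].
apply: ord_inj; apply/eqP; rewrite eqn_leq; apply/andP; split;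
  rewrite leqNgt; apply/negP => lt.
  by have := ge2 i2 (leqnn _); rewrite lt1 // suffix_eq0.
by have := ge1 i1 (leqnn _); rewrite lt2 // suffix_eq0.
Qed.

Lemma card_extension_set : #|extension_set| = \sum_(i < k | j <= i) m ^ (k - i).
Proof.
rewrite (eq_bigr (fun i : 'I_k => #|extensions i|)); last first.
  by move=> i _; rewrite card_extensions // ltnW.
under eq_bigr do rewrite -sum1_card.
rewrite (exchange_big_dep predT) //= -sum1_card big_mkcond /=.
apply: eq_bigr => y _.
case: (boolP (y \in extension_set)) => [/extension_setP [i0 j_i0 y_i0] | y_nin].
  rewrite (bigD1 i0) /=; last by rewrite j_i0 y_i0.
  rewrite big1 // => i /andP [/andP [j_i y_i] neq].
  by rewrite (extensions_uniq j_i j_i0 y_i y_i0) eqxx in neq.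
rewrite big1 // => i /andP [j_i y_i].
by case/negP: y_nin; apply/extension_setP; exists i.
Qed.

Lemma last_eq0 : v last_pos = 0 :> nat.
Proof. by apply: suffix_eq0; ord_lia. Qed.

Lemma extension_set_last y : y \in extension_set -> y last_pos <> 0 :> nat.
Proof.
by case/extension_setP => i _ /extensionsP [_]; apply; move: (ltn_ord i); ord_lia.
Qed.

Lemma extension_set_agree y (p : 'I_k) : y \in extension_set -> p < j -> y p = v p.
Proof. by case/extension_setP => i j_i /extensionsP [lt _] p_j; apply: lt; lia. Qed.

Lemma twins_last y : y \in twins -> y last_pos = 0 :> nat.
Proof. by case/twinsP => j_gt0 agree _; rewrite agree ?last_eq0 //; ord_lia. Qed.

Lemma twins_pos_j y : y \in twins -> y pos_j <> 0 :> nat /\ y pos_j <> v pos_j.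
Proof. by case/twinsP => _ _; apply. Qed.

Lemma disjoint_extensions_twins : [disjoint extension_set & twins].
Proof.
apply/pred0P => y /=; apply/negP => /andP [ext tw].
by apply: (extension_set_last ext); apply: twins_last.
Qed.

Lemma extension_twin_nadj x y : x \in extension_set -> y \in twins -> adj x y = false.
Proof.
move=> ext tw; have /twinsP [j_gt0 _ _] := tw; have [y_neq0 y_neq] := twins_pos_j tw.
have x_eq : x pos_j = v pos_j by apply: extension_set_agree => //=; lia.
apply/negP => /adjP [_ [/R1P agree | [h | [/R2P [i [_ h]] | h]]]].
- by apply: y_neq; rewrite -x_eq agree //=; lia.
- by have [] := R2_last h; move/(extension_set_last ext).
- have [lt ge] := h pos_j; case: (ltnP pos_j i) => p_i.
    by apply: y_neq; rewrite (lt p_i).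
  by have [/y_neq0] := ge p_i.
- by have [] := R3_last h; move/(extension_set_last ext).
Qed.

Lemma extension_set_adj y : y \in extension_set -> adj v y.
Proof.
move=> ext; have /extension_setP [i j_i /extensionsP [lt ge]] := ext.
apply/adjP; split; first by move=> e; apply: (extension_set_last ext); rewrite -e last_eq0.
case: (ltnP i k.-1) => i_lt; last first.
  by left; apply/R1P => p p_lt; rewrite lt //; ord_lia.
right; left; apply/R2P; exists i; split; first by ord_lia.
by move=> p; split => [/lt -> // | i_p]; split; [apply: suffix_eq0; lia | exact: ge].
Qed.

Lemma twins_adj y : y \in twins -> adj v y.
Proof.
move=> tw; have /twinsP [j_gt0 agree diff] := tw; have [_ y_neq] := twins_pos_j tw.
apply/adjP; split; first by move=> e; apply: y_neq; rewrite e.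
right; right; right; apply/R3P; exists j; split; first by rewrite j_gt0.
move=> p; split; first by move=> p_lt; rewrite agree //; lia.
split; first by move=> p_j; have [? ?] := diff p p_j; split; [exact: pred_neq0 | | apply: nesym].
by move=> j_p; rewrite agree; [split; apply: suffix_eq0 | lia].
Qed.

Lemma nbhd_suffix_eq0 : nbhd v = extension_set :|: twins.
Proof.
apply/eqP; rewrite eqEsubset; apply/andP; split; apply/subsetP => y; last first.
  by rewrite in_setU in_nbhd => /orP [/extension_set_adj | /twins_adj].
rewrite in_nbhd in_setU => /adjP [neq [/R1P agree | [/R2P [i [i_lt h]] | [h | /R3P [i [i_lt h]]]]]].
- apply/orP; left; apply/extension_setP; exists last_pos; first by ord_lia.
  apply/extensionsP; split => [p /agree -> // | p p_ge y0]; apply: neq.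
  apply/ffunP => q; have [q_lt | q_ge] := ltnP q k.-1; first by rewrite agree.
  rewrite (last_posE (p := q)) -?leqNgt //; apply: ord_inj.
  by rewrite last_eq0 -(last_posE (p := p)) // -leqNgt.
- have j_i : j <= i.
    rewrite leqNgt; apply/negP => i_lt_j; have [_ ge] := h pos_j.
    have i_le : i <= pos_j by rewrite /=; lia.
    by have [v0 _] := ge i_le; apply: (pred_neq0 (p := pos_j) _ erefl v0); lia.
  apply/orP; left; apply/extension_setP; exists (Ordinal (ltnW i_lt)) => //.
  apply/extensionsP; split => p; have [lt ge] := h p; first by move/lt ->.
  by case/ge.
- by have [_ /(_ last_eq0)] := R2_last h.
- have i1_lt : i.-1 < k by lia.
  have [_ [/(_ erefl) [v_neq0 _ _] _]] := h (Ordinal i1_lt).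
  have i_j : i = j.
    have : i.-1 < j.
      by rewrite ltnNge; apply/negP => j_le; apply: v_neq0; exact: suffix_eq0.
    case: (ltnP i j) => [i_lt_j _ | ]; last by lia.
    have i_le : i <= pos_j by rewrite /=; lia.
    have [_ [_ /(_ i_le) [v0 _]]] := h pos_j.
    by case: (pred_neq0 (p := pos_j) _ erefl v0); lia.
  subst i; apply/orP; right; apply/twinsP; split; first by lia.
    move=> p p_j; have [lt [_ ge]] := h p.
    case: (ltnP p j.-1) => p_lt; first by rewrite lt.
    by have [v0 y0] := ge ltac:(lia); apply: ord_inj; rewrite v0 y0.
  by move=> p /(proj1 (proj2 (h p))) [_ ? ?]; split => //; apply: nesym.
Qed.

Lemma common_nbhd_extension a : a \in extension_set -> nbhd v :&: nbhd a = siblings a.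
Proof.
move=> ext; have a_neq0 := extension_set_last ext.
apply/setP => b; rewrite in_setI nbhd_suffix_eq0 in_setU !in_nbhd.
case sib: (b \in siblings a).
  have /siblingsP [agree b_neq0 neq] := sib.
  have -> : adj a b.
    by apply: R1_adj => [e | p p_lt]; [apply: neq; rewrite e | rewrite agree].
  rewrite andbT.
  have /extension_setP [i j_i /extensionsP [lt ge]] := ext.
  apply/orP; left; apply/extension_setP; exists i => //; apply/extensionsP.
  split=> p p_i; first by rewrite agree ?lt //; move: (ltn_ord i); lia.
  have [p_lt | p_ge] := ltnP p k.-1; first by rewrite agree //; exact: ge.
  by rewrite (last_posE (p := p)) // -leqNgt.
apply/negP => /andP [/orP [ext_b | tw] ab].
  2: by rewrite (extension_twin_nadj ext tw) in ab.
move/negP: sib; apply; apply/siblingsP.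
move/adjP: ab => [neq [/R1P agree | [h | [h | h]]]].
- split; [by move=> p /agree -> | exact: extension_set_last ext_b |].
  move=> e; apply: neq; apply/ffunP => p; have [p_lt | p_ge] := ltnP p k.-1.
    by rewrite agree.
  by rewrite (last_posE (p := p)) -?leqNgt // e.
- by have [/a_neq0] := R2_last h.
- by have [/(extension_set_last ext_b)] := R2_last h.
- by have [/a_neq0] := R3_last h.
Qed.

Lemma common_nbhd_twin a : a \in twins -> nbhd v :&: nbhd a = twins :\ a.
Proof.
move=> tw_a; apply/setP => b; rewrite in_setI nbhd_suffix_eq0 in_setU !in_nbhd in_setD1.
case ext_b: (b \in extension_set) => /=.
  have -> : (b \in twins) = false.
    by apply/negP => /twins_last; exact: extension_set_last ext_b.
  by rewrite andbF adj_sym extension_twin_nadj.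
case tw_b: (b \in twins); rewrite ?andbF ?andbT //.
have [-> | neq] := eqVneq b a; first by rewrite adjxx.
move/twinsP: tw_a => [j_gt0 agree_a diff_a]; move/twinsP: tw_b => [_ agree_b diff_b].
apply/adjP; split; first by move/eqP: neq => neq e; apply: neq.
right; right; right; apply/R3P; exists j; split; first by rewrite j_gt0.
move=> p; split; first by move=> p_lt; rewrite agree_a ?agree_b //; lia.
split; last by move=> j_p; rewrite agree_a ?agree_b; [split; apply: suffix_eq0 | lia | lia].
move=> p_j; have [a_neq0 _] := diff_a p p_j; have [b_neq0 _] := diff_b p p_j.
split => // e; move/eqP: neq; apply; apply/ffunP => q.
have [q_j | q_nj] := eqVneq (q : nat) j.-1.
  by rewrite (ord_inj (etrans q_j (esym p_j))) e.
by rewrite agree_a ?agree_b //; apply/eqP.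
Qed.

Lemma deg_suffix_eq0 : deg v = #|extension_set| + #|twins|.
Proof.
rewrite /deg -/(nbhd v) nbhd_suffix_eq0 -sum1_card.
by rewrite sum_nat_setU_disjoint ?disjoint_extensions_twins // !sum1_card.
Qed.

Lemma sum_common_suffix_eq0 : \sum_(a in nbhd v) #|nbhd v :&: nbhd a| =
  #|extension_set| * m.-1 + #|twins| * (#|twins|).-1.
Proof.
rewrite nbhd_suffix_eq0 sum_nat_setU_disjoint ?disjoint_extensions_twins //.
rewrite -nbhd_suffix_eq0 (eq_bigr (fun _ => m.-1)); last first.
  move=> a ext; rewrite common_nbhd_extension // card_siblings //.
  by apply/eqP; exact: extension_set_last.
rewrite [X in _ + X](eq_bigr (fun _ => (#|twins|).-1)); last first.
  by move=> a tw; rewrite common_nbhd_twin // (cardsD1 a twins) tw.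
by rewrite !sum_nat_const.
Qed.
End SuffixZero.
End Graph.

Lemma geom_tail_sum (R : comNzRingType) (q j K : nat) : j <= K ->
  ((\sum_(i < K | j <= i) q ^ (K - i))%N%:R * (q%:R - 1) + q%:R = q%:R ^+ (K - j).+1 :> R)%R.
Proof.
elim: K => [|K IH] j_le.
  have -> : j = 0 by lia.
  by rewrite big_ord0 mul0r add0r expr1.
have [-> | j_neq] := eqVneq j K.+1.
  by rewrite subnn expr1 big1 ?mul0r ?add0r // => i; move: (ltn_ord i); lia.
have j_leK : j <= K by lia.
have -> : \sum_(i < K.+1 | j <= i) q ^ (K.+1 - i) = q * \sum_(i < K | j <= i) q ^ (K - i) + q.
  rewrite big_mkcond big_ord_recr /= j_leK subSnn expn1; congr (_ + _).
  rewrite big_distrr [RHS]big_mkcond /=; apply: eq_bigr => i _; case: ifP => // _.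
  by rewrite subSn ?expnS // ltnW.
by rewrite natrD natrM subSn // exprS -IH //; ring.
Qed.

Lemma leq_geom_tail_sum (q j K : nat) : j < K -> q <= \sum_(i < K | j <= i) q ^ (K - i).
Proof.
move=> j_lt; have K1_lt : K.-1 < K by lia.
rewrite (bigD1 (Ordinal K1_lt)) /=; last by lia.
have -> : K - K.-1 = 1 by lia.
by rewrite expn1 leq_addr.
Qed.

Section ClusteringCoefficients.
Variables (m k : nat).
Hypothesis m_gt0 : 0 < m.
Local Notation n := m.+1.
Local Open Scope ring_scope.

Let natr_succ : n%:R = m%:R + 1 :> rat. Proof. by rewrite -natr1. Qed.
Let natr_pred : m.-1%:R = m%:R - 1 :> rat. Proof. by rewrite -subn1 natrB. Qed.

Lemma clust_nonzero_suffix (s : nat) (v : vtx n k) : (s < k)%N ->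
  (forall p : 'I_k, (s <= p)%N -> v p <> 0%N :> nat) ->
  (forall p : 'I_k, (0 < s)%N -> p = s.-1 :> nat -> v p = 0%N :> nat) ->
  clust v = ((n%:R - 1) ^+ 2 + (2 * k%:R - 2 * s%:R - 3) * (n%:R - 1)
               + 2 + 2 * s%:R - 2 * k%:R)
            / ((n%:R + k%:R - s%:R - 2) * (n%:R + k%:R - s%:R - 3)).
Proof.
move=> s_lt suffix_neq0 pred_eq0; have k_gt0 : (0 < k)%N by lia.
rewrite clust_sum_common (sum_common_suffix_neq0 k_gt0 s_lt suffix_neq0 pred_eq0).
rewrite (deg_suffix_neq0 k_gt0 s_lt suffix_neq0 pred_eq0).
have natB : (k - s)%:R = k%:R - s%:R :> rat by rewrite natrB // ltnW.
have natD1 : (m.-1 + (k - s)).-1%:R = m%:R - 2 + k%:R - s%:R :> rat.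
  by rewrite -subn1 natrB; [rewrite natrD natr_pred natB; ring | lia].
by rewrite !natrD !natrM natD1 natr_pred natB natr_succ; congr (_ / _); ring.
Qed.

Lemma clust_root (r : vtx n k) :
  (1 < m)%N -> (0 < k)%N -> (forall p : 'I_k, r p = 0%N :> nat) ->
  clust r = (n%:R - 2) ^+ 2 / ((n%:R - 1) ^+ k.+1 - 2 * n%:R + 3).
Proof.
move=> m_gt1 k_gt0 r0.
have suffix_eq0 (p : 'I_k) : (0 <= p)%N -> r p = 0%N :> nat by move=> _; exact: r0.
have pred_neq0 (p : 'I_k) : (0 < 0)%N -> p = 0.-1 :> nat -> r p <> 0%N :> nat by [].
rewrite clust_sum_common (sum_common_suffix_eq0 k_gt0 k_gt0 suffix_eq0 pred_neq0).
rewrite (deg_suffix_eq0 k_gt0 k_gt0 suffix_eq0 pred_neq0) twins_j0 // cards0 card_extension_set //.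
have := geom_tail_sum rat m (leq0n k); rewrite subn0.
have := leq_geom_tail_sum m k_gt0; rewrite -(ler_nat rat).
set g := \sum_(i < k | _) _ => m_le_g geomE.
have m_ge2 : 2 <= m%:R :> rat by rewrite (ler_nat _ 2 m).
rewrite muln0 !addn0 natrM natr_pred natr_succ addrK -geomE.
by field; apply/and3P; split; rewrite gt_eqF //; nra.
Qed.

Lemma clust_zero_suffix (j : nat) (v : vtx n k) : (1 < m)%N -> (0 < j < k)%N ->
  (forall p : 'I_k, p = j.-1 :> nat -> v p <> 0%N :> nat) ->
  (forall p : 'I_k, (j <= p)%N -> v p = 0%N :> nat) ->
  clust v = (n%:R - 2) ^+ 2 / ((n%:R - 1) ^+ (k - j).+1 + (n%:R - 1) ^+ 2 - 3 * n%:R + 4).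
Proof.
move=> m_gt1 /andP [j_gt0 j_lt] v_j suffix_eq0; have k_gt0 : (0 < k)%N by lia.
have pred_neq0 (p : 'I_k) : (0 < j)%N -> p = j.-1 :> nat -> v p <> 0%N :> nat.
  by move=> _; exact: v_j.
rewrite clust_sum_common (sum_common_suffix_eq0 k_gt0 j_lt suffix_eq0 pred_neq0).
rewrite (deg_suffix_eq0 k_gt0 j_lt suffix_eq0 pred_neq0).
rewrite (card_twins j_lt pred_neq0 j_gt0) (card_extension_set suffix_eq0).
have := geom_tail_sum rat m (ltnW j_lt).
have := leq_geom_tail_sum m j_lt; rewrite -(ler_nat rat).
set g := \sum_(i < k | _) _ => m_le_g geomE.
have m_ge2 : 2 <= m%:R :> rat by rewrite (ler_nat _ 2 m).
have natr_pred2 : m.-2%:R = m%:R - 2 :> rat by rewrite -!subn1 -subnDA natrB //; lia.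
rewrite !natrD !natrM natr_pred natr_pred2 natr_succ addrK -geomE.
by field; apply/and3P; split; rewrite gt_eqF //; nra.
Qed.
End ClusteringCoefficients.
Unset Implicit Arguments.

Theorem mainTheorem10 (n k : nat) (hn : (3 <= n)%N) (hk : (1 <= k)%N) :
  (forall r : vtx n k, (forall p : 'I_k, val (r p) = 0%N) ->
     clust r = ((n%:R - 2) ^+ 2 / ((n%:R - 1) ^+ k.+1 - 2 * n%:R + 3))%R)
  /\
  (forall i : nat, (1 <= i <= k - 1)%N -> forall v : vtx n k,
     (forall p : 'I_k, val p = i.-1 -> val (v p) <> 0%N) ->
     (forall p : 'I_k, (i <= p)%N -> val (v p) = 0%N) ->
     clust v = ((n%:R - 2) ^+ 2 /
                ((n%:R - 1) ^+ (k - i).+1 + (n%:R - 1) ^+ 2 - 3 * n%:R + 4))%R)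
  /\
  (forall v : vtx n k, (forall p : 'I_k, val (v p) <> 0%N) ->
     clust v = (((n%:R - 1) ^+ 2 + (2 * k%:R - 3) * (n%:R - 1) + 2 - 2 * k%:R)
                / ((n%:R + k%:R - 2) * (n%:R + k%:R - 3)))%R)
  /\
  (forall i : nat, (1 <= i <= k - 1)%N -> forall v : vtx n k,
     (forall p : 'I_k, val p = i.-1 -> val (v p) = 0%N) ->
     (forall p : 'I_k, (i <= p)%N -> val (v p) <> 0%N) ->
     clust v = (((n%:R - 1) ^+ 2 + (2 * k%:R - 2 * i%:R - 3) * (n%:R - 1)
                 + 2 + 2 * i%:R - 2 * k%:R)
                / ((n%:R + k%:R - i%:R - 2) * (n%:R + k%:R - i%:R - 3)))%R).
Proof.
case: n hn => // m n_ge3.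
have m_gt1 : (1 < m)%N by lia.
have m_gt0 : (0 < m)%N by lia.
split; [|split; [|split]].
- by move=> r r0; apply: clust_root => // p; exact: r0.
- move=> i /andP [i_gt0 i_le] v v_i suffix_eq0.
  apply: (clust_zero_suffix m_gt0 m_gt1) => //.
  by rewrite i_gt0 /=; lia.
- move=> v v_neq0.
  have suffix_neq0 (p : 'I_k) : (0 <= p)%N -> v p <> 0%N :> nat by move=> _; exact: v_neq0.
  by rewrite (clust_nonzero_suffix m_gt0 hk suffix_neq0) // !mulr0 !subr0 ?addr0.
- move=> i /andP [i_gt0 i_le] v v_i suffix_neq0.
  apply: (clust_nonzero_suffix m_gt0) => //; first by lia.
  by move=> p _; exact: v_i.
Qed.
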